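(* Let $f:\mathbb{N}\to\mathbb{R}$ be non-decreasing with $f(n)>28$ for all $n$, and $p=f(n)\log n/n$. Let $Y=\sum_{i=1}^{n/7}X_i$, where the $X_i$ are independent and $X_i\sim\mathrm{Geom}(1-(1-p)^i)$. Then for every $\varepsilon>0$, $$\mathbb{P}\Big((1-\varepsilon)\Big(\frac n7+\frac n{f(n)}\Big)<Y<(1+\varepsilon)\Big(\frac n7+\frac n{f(n)}\Big)\Big)\longrightarrow 1\quad\text{as }n\to\infty.$$
   Context: $\mathrm{Geom}(q)$ denotes the geometric distribution on $\{1,2,3,\dots\}$ with success probability $q$, i.e. $\mathbb{P}(X=k)=(1-q)^{k-1}q$ (number of trials up to and including the first success). The upper summation limit $n/7$ is understood as an integer (e.g. $\lfloor n/7\rfloor$). *)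

From Stdlib Require Import Reals Lra Lia ZArith Arith List.
Open Scope R_scope.

Definition geom_pmf (q : R) (k : nat) : R :=
  match k with
  | O => 0
  | S j => (1 - q) ^ j * q
  end.

Fixpoint sum_1_to (k : nat) (g : nat -> R) : R :=
  match k with
  | O => 0
  | S j => sum_1_to j g + g (S j)
  end.

(* pmf of the sum of independent geometric variables with success
   probabilities qs (law of the independent sum = convolution of the laws). *)
Fixpoint indep_geom_sum_pmf (qs : list R) (k : nat) : R :=
  match qs with
  | nil => if Nat.eqb k 0 then 1 else 0
  | q :: qs' => sum_1_to k (fun j => geom_pmf q j * indep_geom_sum_pmf qs' (k - j))
  end.

Fixpoint sum_0_to (M : nat) (g : nat -> R) : R :=
  match M with
  | O => g O
  | S m => sum_0_to m g + g (S m)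
  end.

(* P(a < Y < b) for Y = sum of independent Geom(q), q in qs.
   Y takes values in nat, and INR k < b forces k < up b, so the sum is exact. *)
Definition prob_strictly_between (qs : list R) (a b : R) : R :=
  sum_0_to (Z.to_nat (up b))
    (fun k => if Rlt_dec a (INR k) then
                if Rlt_dec (INR k) b then indep_geom_sum_pmf qs k else 0
              else 0).

Definition edge_p (f : nat -> R) (n : nat) : R :=
  Rmin 1 (f n * ln (INR n) / INR n).

Definition succ_probs (f : nat -> R) (n : nat) : list R :=
  map (fun i => 1 - (1 - edge_p f n) ^ i) (seq 1 (Nat.div n 7)).

Definition target (f : nat -> R) (n : nat) : R :=
  INR (Nat.div n 7) + INR n / f n.

(* [Y] is a sum of independent geometric variables with success probabilities
   [q_i = 1 - (1 - p)^i >= p], so [E[z^Y]] is the product of the [q z / (1 - (1 - q) z)].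
   Chernoff's bounds at [z = 1 +- e p / 8] show that [Y] lies in [((1 - e) T, (1 + e) T)]
   with probability at least [1 - 3 exp (- e^2 p T / 32)] as soon as [E[Y]] is within
   [e T / 5] of [T].  Here [E[Y] = sum 1 / q_i = n/7 + sum (1 - p)^i / (1 - (1 - p)^i)], and
   the last sum lies between [(1 - K p) H_K / p] and [H_(n/7) / p], where [H] are the
   harmonic numbers and [K ~ n / log^2 n].  Since [1 / p ~ n / (f n log n)] and
   [H_K ~ H_(n/7) ~ log n], this gives [E[Y] = n/7 + n / f n + o(n)].  Finally
   [p T >= (log n) / 8] tends to infinity. *)

From Stdlib Require Import Reals Lra Lia List ZArith.
From Coquelicot Require Import Hierarchy.
Open Scope R_scope.

(** * Elementary inequalities *)

Lemma exp_le (x y : R) : x <= y -> exp x <= exp y.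
Proof. intros [Hxy | ->]; [apply Rlt_le, exp_increasing|]; lra. Qed.

Lemma ln_le (x y : R) : 0 < x -> x <= y -> ln x <= ln y.
Proof. intros Hx [Hxy | ->]; [apply Rlt_le, ln_increasing|]; lra. Qed.

Lemma ln_le_minus_1 (x : R) : 0 < x -> ln x <= x - 1.
Proof. intros Hx. pose proof (exp_ineq1_le (ln x)). rewrite exp_ln in *; lra. Qed.

Lemma ln_ge_1_minus_inv (x : R) : 0 < x -> 1 - / x <= ln x.
Proof.
  intros Hx. pose proof (exp_ineq1_le (ln (/ x))) as H.
  rewrite exp_ln, ln_Rinv in H by (try apply Rinv_0_lt_compat; lra). lra.
Qed.

(* Stdlib's [ln] is [0] on nonpositive arguments. *)
Lemma ln_pos_arg (x : R) : 0 < ln x -> 0 < x.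
Proof. unfold ln. destruct Rlt_dec; [tauto | lra]. Qed.

Lemma ln_le_mul (d x : R) : 0 < d -> 4 / d ^ 2 <= x -> ln x <= d * x.
Proof.
  intros Hd Hx. assert (Hx0 : 0 < x) by (eapply Rlt_le_trans; [|exact Hx];
    apply Rdiv_lt_0_compat; [lra | apply pow_lt; lra]).
  set (s := sqrt x). assert (Hs : 0 < s) by (apply sqrt_lt_R0; lra).
  assert (Hss : s * s = x) by apply sqrt_sqrt, Rlt_le, Hx0.
  assert (Hln : ln x = 2 * ln s) by (rewrite <- Hss, ln_mult by lra; ring).
  assert (Hds : 2 <= d * s).
  { apply Rsqr_incr_0_var; [|nra]. unfold Rsqr.
    replace (d * s * (d * s)) with (d ^ 2 * x) by (rewrite <- Hss; ring).
    apply (Rmult_le_reg_r (/ d ^ 2)); [apply Rinv_0_lt_compat, pow_lt; lra|].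
    replace (d ^ 2 * x * / d ^ 2) with x by (field; lra). unfold Rdiv in Hx. lra. }
  pose proof (ln_le_minus_1 s Hs). rewrite Hln, <- Hss. nra.
Qed.

Lemma inv_1_minus_le_exp (x : R) : 0 <= x < 1 -> / (1 - x) <= exp (x / (1 - x)).
Proof.
  intros Hx. replace (/ (1 - x)) with (1 + x / (1 - x)) by (field; lra).
  apply exp_ineq1_le.
Qed.

Lemma inv_1_plus_le_exp (x : R) : 0 <= x -> / (1 + x) <= exp (- (x / (1 + x))).
Proof.
  intros Hx. replace (/ (1 + x)) with (1 + - (x / (1 + x))) by (field; lra).
  apply exp_ineq1_le.
Qed.

Lemma pow_exp_ln (z : R) (k : nat) : 0 < z -> z ^ k = exp (INR k * ln z).
Proof. intros Hz. now rewrite <- Rpower_pow. Qed.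

Lemma pow_le_1 (x : R) (n : nat) : 0 <= x <= 1 -> x ^ n <= 1.
Proof. intros Hx. rewrite <- (pow1 n). apply pow_incr. lra. Qed.

Lemma pow_1_minus_ge (p : R) (i : nat) : 0 <= p <= 1 -> 1 - INR i * p <= (1 - p) ^ i.
Proof.
  intros Hp. induction i as [|i IH]; [simpl; lra|]. rewrite S_INR. simpl pow.
  pose proof (pos_INR i). nra.
Qed.

Lemma div_le_of_le_mul (a b c : R) : 0 < c -> a <= b * c -> a / c <= b.
Proof.
  intros Hc Hab. apply (Rmult_le_reg_r c); [exact Hc|].
  unfold Rdiv. rewrite Rmult_assoc, Rinv_l; lra.
Qed.

Lemma lt_INR_up (b : R) : b < INR (Z.to_nat (up b)).
Proof.
  destruct (archimed b) as [Hb _]. destruct (Z_le_gt_dec (up b) 0) as [Hup | Hup].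
  - replace (Z.to_nat (up b)) with 0%nat by lia. apply IZR_le in Hup. simpl. lra.
  - rewrite INR_IZR_INZ, Z2Nat.id by lia. lra.
Qed.

Lemma up_nat_bounds (x : R) : 0 < x -> x <= INR (Z.to_nat (up x)) <= x + 1.
Proof.
  intros Hx. destruct (archimed x) as [H1 H2].
  assert (Hup : (0 <= up x)%Z) by (apply le_IZR; lra).
  rewrite INR_IZR_INZ, Z2Nat.id by exact Hup. lra.
Qed.

(** * The law of a sum of independent geometric variables *)

Lemma sum_0_to_sum_f_R0 (M : nat) (g : nat -> R) : sum_0_to M g = sum_f_R0 g M.
Proof. induction M as [|M IH]; simpl; [reflexivity | now rewrite IH]. Qed.

Lemma sum_f_R0_shift (g : nat -> R) (K : nat) :
  sum_f_R0 g (S K) = g O + sum_f_R0 (fun k => g (S k)) K.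
Proof. now rewrite decomp_sum by lia. Qed.

Lemma sum_1_to_ext (M : nat) (g h : nat -> R) :
  (forall k, (1 <= k <= M)%nat -> g k = h k) -> sum_1_to M g = sum_1_to M h.
Proof.
  induction M as [|M IH]; intros Hgh; simpl; [reflexivity|].
  rewrite IH by (intros; apply Hgh; lia). now rewrite Hgh by lia.
Qed.

Lemma sum_1_to_le (M : nat) (g h : nat -> R) :
  (forall k, (1 <= k <= M)%nat -> g k <= h k) -> sum_1_to M g <= sum_1_to M h.
Proof.
  induction M as [|M IH]; intros Hgh; simpl; [lra|].
  apply Rplus_le_compat; [apply IH; intros; apply Hgh|apply Hgh]; lia.
Qed.

Lemma sum_1_to_scal (M : nat) (c : R) (g : nat -> R) :
  sum_1_to M (fun k => c * g k) = c * sum_1_to M g.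
Proof. induction M as [|M IH]; simpl; [|rewrite IH]; ring. Qed.

Lemma sum_1_to_shift (M : nat) (g : nat -> R) :
  sum_1_to (S M) g = g 1%nat + sum_1_to M (fun k => g (S k)).
Proof. induction M as [|M IH]; [simpl; ring|]. simpl sum_1_to in *. rewrite IH. ring. Qed.

Lemma sum_1_to_le_nonneg (K M : nat) (g : nat -> R) :
  (K <= M)%nat -> (forall k, (1 <= k <= M)%nat -> 0 <= g k) -> sum_1_to K g <= sum_1_to M g.
Proof.
  intros HKM Hg. induction HKM as [|M HKM IH]; [lra|]. simpl.
  assert (0 <= g (S M)) by (apply Hg; lia).
  enough (sum_1_to K g <= sum_1_to M g) by lra.
  apply IH. intros; apply Hg; lia.
Qed.

Local Notation pmf := indep_geom_sum_pmf.

(* Condition on the first trial of the first geometric variable. *)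
Lemma pmf_cons_S (q : R) (qs : list R) (k : nat) :
  pmf (q :: qs) (S k) = q * pmf qs k + (1 - q) * pmf (q :: qs) k.
Proof.
  change (pmf (q :: qs) (S k)) with (sum_1_to (S k) (fun j => geom_pmf q j * pmf qs (S k - j))).
  change (pmf (q :: qs) k) with (sum_1_to k (fun j => geom_pmf q j * pmf qs (k - j))).
  rewrite sum_1_to_shift, <- sum_1_to_scal. simpl geom_pmf.
  replace (S k - 1)%nat with k by lia. f_equal; [ring|].
  apply sum_1_to_ext. intros [|j] Hj; [lia|]. simpl. ring.
Qed.

(* Partial sums carry a weight [c k] ([1] or [z ^ k]) so that one recursion serves both. *)
Lemma sum_pmf_cons_S (q : R) (qs : list R) (c : nat -> R) (K : nat) :
  sum_f_R0 (fun k => c k * pmf (q :: qs) k) (S K)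
  = q * sum_f_R0 (fun k => c (S k) * pmf qs k) K
    + (1 - q) * sum_f_R0 (fun k => c (S k) * pmf (q :: qs) k) K.
Proof.
  rewrite sum_f_R0_shift, !scal_sum, <- plus_sum. simpl pmf at 1.
  rewrite Rmult_0_r, Rplus_0_l. apply sum_eq. intros k _. rewrite pmf_cons_S. ring.
Qed.

Lemma pmf_nil_sum (K : nat) : sum_f_R0 (fun k => 1 * pmf nil k) K = 1.
Proof. induction K as [|K IH]; simpl in *; lra. Qed.

Lemma pmf_nonneg (qs : list R) (k : nat) :
  Forall (fun q => 0 <= q <= 1) qs -> 0 <= pmf qs k.
Proof.
  intros Hqs. revert k. induction Hqs as [|q qs Hq Hqs IH]; intros k.
  - simpl. destruct (Nat.eqb k 0); lra.
  - induction k as [|k IHk]; [simpl; lra|]. rewrite pmf_cons_S.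
    specialize (IH k). apply Rplus_le_le_0_compat; apply Rmult_le_pos; lra.
Qed.

Lemma sum_pmf_le_1 (qs : list R) (K : nat) :
  Forall (fun q => 0 <= q <= 1) qs -> sum_f_R0 (fun k => 1 * pmf qs k) K <= 1.
Proof.
  intros Hqs. revert K. induction Hqs as [|q qs Hq Hqs IH]; intros K.
  - rewrite pmf_nil_sum; lra.
  - induction K as [|K IHK]; [simpl; lra|]. rewrite sum_pmf_cons_S.
    specialize (IH K). nra.
Qed.

(** * Generating functions and Chernoff bounds *)

Definition geom_pgf (q z : R) : R := q * z / (1 - (1 - q) * z).

Definition geom_sum_pgf (qs : list R) (z : R) : R :=
  fold_right (fun q acc => geom_pgf q z * acc) 1 qs.

Definition in_pgf_domain (z q : R) : Prop := 0 < q <= 1 /\ (1 - q) * z < 1.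

Lemma in_pgf_domain_prob (z : R) (qs : list R) :
  Forall (in_pgf_domain z) qs -> Forall (fun q => 0 <= q <= 1) qs.
Proof. apply Forall_impl. intros q [Hq _]. lra. Qed.

Lemma geom_pgf_nonneg (q z : R) : 0 <= z -> in_pgf_domain z q -> 0 <= geom_pgf q z.
Proof.
  intros Hz [Hq Hqz]. unfold geom_pgf.
  apply Rmult_le_pos; [nra | apply Rlt_le, Rinv_0_lt_compat; lra].
Qed.

Lemma geom_pgf_ge_id (q z : R) : 1 <= z -> in_pgf_domain z q -> z <= geom_pgf q z.
Proof.
  intros Hz [Hq Hqz].
  assert (E : geom_pgf q z - z = z * (1 - q) * (z - 1) / (1 - (1 - q) * z))
    by (unfold geom_pgf; field; lra).
  enough (0 <= z * (1 - q) * (z - 1) / (1 - (1 - q) * z)) by lra.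
  apply Rmult_le_pos; [apply Rmult_le_pos; nra | apply Rlt_le, Rinv_0_lt_compat; lra].
Qed.

Lemma geom_pgf_fixpoint (q z x : R) : (1 - q) * z < 1 ->
  geom_pgf q z * x = z * (q * x + (1 - q) * (geom_pgf q z * x)).
Proof. intros Hqz. unfold geom_pgf. field. lra. Qed.

Lemma geom_sum_pgf_nonneg (qs : list R) (z : R) :
  0 <= z -> Forall (in_pgf_domain z) qs -> 0 <= geom_sum_pgf qs z.
Proof.
  intros Hz Hqs. induction Hqs as [|q qs Hq Hqs IH]; simpl; [lra|].
  apply Rmult_le_pos; [apply geom_pgf_nonneg|]; assumption.
Qed.

Lemma geom_sum_pgf_ge_1 (qs : list R) (z : R) :
  1 <= z -> Forall (in_pgf_domain z) qs -> 1 <= geom_sum_pgf qs z.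
Proof.
  intros Hz Hqs. induction Hqs as [|q qs Hq Hqs IH]; simpl; [lra|].
  pose proof (geom_pgf_ge_id q z Hz Hq). nra.
Qed.

Lemma partial_pgf_le (qs : list R) (z : R) (K : nat) :
  0 <= z -> Forall (in_pgf_domain z) qs ->
  sum_f_R0 (fun k => z ^ k * pmf qs k) K <= geom_sum_pgf qs z.
Proof.
  intros Hz Hqs. revert K. induction Hqs as [|q qs Hq Hqs IH]; intros K.
  - simpl geom_sum_pgf. rewrite <- (pmf_nil_sum K). apply Req_le, sum_eq.
    intros [|k] _; simpl; ring.
  - pose proof (geom_sum_pgf_nonneg qs z Hz Hqs) as HPi.
    pose proof (geom_pgf_nonneg q z Hz Hq) as HG. destruct Hq as [Hq Hqz].
    simpl geom_sum_pgf. set (B := geom_pgf q z * geom_sum_pgf qs z).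
    assert (HB0 : 0 <= B) by (unfold B; nra).
    assert (HBz : B = z * (q * geom_sum_pgf qs z + (1 - q) * B))
      by (apply geom_pgf_fixpoint; assumption).
    induction K as [|K IHK]; [simpl; lra|].
    rewrite (sum_pmf_cons_S q qs (fun k => z ^ k)).
    rewrite (sum_eq _ (fun k => z ^ k * pmf qs k * z)) by (intros; simpl; ring).
    rewrite (sum_eq (fun k => z ^ S k * _) (fun k => z ^ k * pmf (q :: qs) k * z))
      by (intros; simpl; ring).
    rewrite <- !scal_sum. specialize (IH K).
    assert (0 <= q * z) by nra. assert (0 <= (1 - q) * z) by nra.
    rewrite HBz. nra.
Qed.

(* Chernoff's bound for the upper tail: [P(Y > K) <= z^-(K+1) E[z^Y]]. *)
Lemma partial_sum_pmf_ge (qs : list R) (z : R) (K : nat) :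
  1 <= z -> Forall (in_pgf_domain z) qs ->
  1 - (/ z) ^ S K * geom_sum_pgf qs z <= sum_f_R0 (fun k => 1 * pmf qs k) K.
Proof.
  intros Hz Hqs. revert K.
  assert (Hw : 0 < / z <= 1)
    by (split; [apply Rinv_0_lt_compat | rewrite <- Rinv_1; apply Rinv_le_contravar]; lra).
  induction Hqs as [|q qs Hq Hqs IH]; intros K.
  - rewrite pmf_nil_sum. simpl. pose proof (pow_le (/ z) K). nra.
  - pose proof (geom_sum_pgf_ge_1 qs z Hz Hqs) as HPi.
    pose proof (geom_pgf_ge_id q z Hz Hq) as HG. destruct Hq as [Hq Hqz].
    simpl geom_sum_pgf. set (B := geom_pgf q z * geom_sum_pgf qs z).
    assert (HB : z <= B) by (unfold B; nra).
    induction K as [|K IHK].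
    + simpl. rewrite Rmult_0_r, Rmult_1_r.
      enough (1 <= / z * B) by lra.
      rewrite <- (Rinv_l z) by lra. apply Rmult_le_compat_l; lra.
    + rewrite sum_pmf_cons_S. specialize (IH K).
      assert (HBz : B = z * (q * geom_sum_pgf qs z + (1 - q) * B))
        by (apply geom_pgf_fixpoint; assumption).
      assert (E : (/ z) ^ S (S K) * B
                  = (/ z) ^ S K * (q * geom_sum_pgf qs z + (1 - q) * B)).
      { change ((/ z) ^ S (S K)) with (/ z * (/ z) ^ S K).
        rewrite HBz at 1. field. lra. }
      rewrite E. nra.
Qed.

Definition pmf_between (qs : list R) (a b : R) (k : nat) : R :=
  if Rlt_dec a (INR k) then if Rlt_dec (INR k) b then pmf qs k else 0 else 0.

Lemma prob_strictly_between_sum (qs : list R) (a b : R) (M : nat) :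
  (Z.to_nat (up b) <= M)%nat ->
  prob_strictly_between qs a b = sum_f_R0 (pmf_between qs a b) M.
Proof.
  intros HM. unfold prob_strictly_between. rewrite sum_0_to_sum_f_R0.
  induction HM as [|M HM IH]; [reflexivity|]. rewrite IH. simpl.
  enough (pmf_between qs a b (S M) = 0) by lra.
  pose proof (lt_INR_up b). apply le_INR in HM.
  unfold pmf_between. rewrite S_INR. destruct Rlt_dec; [destruct Rlt_dec|]; lra.
Qed.

Lemma prob_strictly_between_le_1 (qs : list R) (a b : R) :
  Forall (fun q => 0 <= q <= 1) qs -> prob_strictly_between qs a b <= 1.
Proof.
  intros Hqs. rewrite (prob_strictly_between_sum qs a b (Z.to_nat (up b)) (le_n _)).
  eapply Rle_trans; [|apply (sum_pmf_le_1 qs (Z.to_nat (up b)) Hqs)]. apply sum_Rle. intros k _.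
  pose proof (pmf_nonneg qs k Hqs).
  unfold pmf_between. destruct Rlt_dec; [destruct Rlt_dec|]; lra.
Qed.

Lemma prob_strictly_between_widen (qs : list R) (a b a' b' : R) :
  Forall (fun q => 0 <= q <= 1) qs -> a' <= a -> b <= b' ->
  prob_strictly_between qs a b <= prob_strictly_between qs a' b'.
Proof.
  intros Hqs Ha Hb. set (M := Nat.max (Z.to_nat (up b)) (Z.to_nat (up b'))).
  rewrite (prob_strictly_between_sum qs a b M), (prob_strictly_between_sum qs a' b' M) by lia.
  apply sum_Rle. intros k _. pose proof (pmf_nonneg qs k Hqs).
  unfold pmf_between. repeat destruct Rlt_dec; lra.
Qed.

Lemma pmf_between_ge (qs : list R) (a b z1 z2 : R) (k : nat) :
  Forall (fun q => 0 <= q <= 1) qs -> 0 < z1 <= 1 -> 1 <= z2 ->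
  pmf qs k * (1 - exp ((INR k - a) * ln z1) - exp ((INR k - b) * ln z2))
  <= pmf_between qs a b k.
Proof.
  intros Hqs Hz1 Hz2. pose proof (pmf_nonneg qs k Hqs) as HP.
  assert (Hl1 : ln z1 <= 0) by (rewrite <- ln_1; apply ln_le; lra).
  assert (Hl2 : 0 <= ln z2) by (rewrite <- ln_1; apply ln_le; lra).
  pose proof (exp_pos ((INR k - a) * ln z1)). pose proof (exp_pos ((INR k - b) * ln z2)).
  unfold pmf_between. destruct Rlt_dec as [Ha|Ha]; [destruct Rlt_dec as [Hb|Hb]|].
  - nra.
  - assert (0 <= (INR k - b) * ln z2) by (apply Rmult_le_pos; lra).
    pose proof (exp_ineq1_le ((INR k - b) * ln z2)). nra.
  - assert (0 <= (INR k - a) * ln z1) by nra.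
    pose proof (exp_ineq1_le ((INR k - a) * ln z1)). nra.
Qed.

(* The upper tail enters twice: through the event [Y >= b] and through the mass beyond
   the truncation [up b] of the sum defining [prob_strictly_between]. *)
Lemma prob_strictly_between_ge (qs : list R) (a b z1 z2 : R) :
  0 < z1 <= 1 -> 1 <= z2 -> Forall (in_pgf_domain z1) qs -> Forall (in_pgf_domain z2) qs ->
  1 - exp (- a * ln z1) * geom_sum_pgf qs z1 - 2 * (exp (- b * ln z2) * geom_sum_pgf qs z2)
  <= prob_strictly_between qs a b.
Proof.
  intros Hz1 Hz2 Hdom1 Hdom2. pose proof (in_pgf_domain_prob _ _ Hdom1) as Hqs.
  set (M := Z.to_nat (up b)). rewrite (prob_strictly_between_sum qs a b M (le_n _)).
  set (E1 := exp (- a * ln z1)). set (E2 := exp (- b * ln z2)).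
  assert (Hsum : sum_f_R0 (fun k => 1 * pmf qs k) M
                 - E1 * sum_f_R0 (fun k => z1 ^ k * pmf qs k) M
                 - E2 * sum_f_R0 (fun k => z2 ^ k * pmf qs k) M
                 <= sum_f_R0 (pmf_between qs a b) M).
  { rewrite !scal_sum, <- !minus_sum. apply sum_Rle. intros k _.
    eapply Rle_trans; [|apply (pmf_between_ge qs a b z1 z2 k Hqs Hz1 Hz2)].
    rewrite !pow_exp_ln by lra. unfold E1, E2.
    replace (exp ((INR k - a) * ln z1)) with (exp (INR k * ln z1) * exp (- a * ln z1))
      by (rewrite <- exp_plus; f_equal; ring).
    replace (exp ((INR k - b) * ln z2)) with (exp (INR k * ln z2) * exp (- b * ln z2))
      by (rewrite <- exp_plus; f_equal; ring).
    lra. }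
  pose proof (partial_pgf_le qs z1 M ltac:(lra) Hdom1).
  pose proof (partial_pgf_le qs z2 M ltac:(lra) Hdom2).
  pose proof (partial_sum_pmf_ge qs z2 M Hz2 Hdom2).
  assert (HM : (/ z2) ^ S M <= E2).
  { rewrite pow_exp_ln, ln_Rinv by (try apply Rinv_0_lt_compat; lra). apply exp_le.
    assert (0 <= ln z2) by (rewrite <- ln_1; apply ln_le; lra).
    pose proof (lt_INR_up b) as Hb. fold M in Hb. rewrite S_INR. nra. }
  assert (0 < E1) by apply exp_pos. assert (0 < E2) by apply exp_pos.
  pose proof (geom_sum_pgf_nonneg qs z2 ltac:(lra) Hdom2).
  nra.
Qed.

Definition geom_sum_mean (qs : list R) : R := fold_right (fun q acc => / q + acc) 0 qs.

Lemma geom_pgf_above_le_exp (q y eta : R) :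
  0 < q <= 1 -> 0 <= y -> y / q <= eta < 1 ->
  in_pgf_domain (1 + y) q /\ geom_pgf q (1 + y) <= exp (y / (1 - eta) / q).
Proof.
  intros Hq Hy Hu. set (u := y / q) in Hu.
  assert (Hu0 : 0 <= u) by (unfold u; apply Rmult_le_pos; [|apply Rlt_le, Rinv_0_lt_compat]; lra).
  assert (Hyu : y = u * q) by (unfold u; field; lra).
  split; [split; [lra | nra]|].
  replace (geom_pgf q (1 + y)) with (/ (1 - u / (1 + y)))
    by (unfold geom_pgf; rewrite Hyu; field; nra).
  eapply Rle_trans; [apply inv_1_minus_le_exp; split;
    [apply Rmult_le_pos; [|apply Rlt_le, Rinv_0_lt_compat]; lra
    | apply (Rmult_lt_reg_r (1 + y)); [lra|]; unfold Rdiv; rewrite Rmult_assoc, Rinv_l; lra]|].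
  apply exp_le. replace (y / (1 - eta) / q) with (u / (1 - eta)) by (unfold u; field; lra).
  replace (u / (1 + y) / (1 - u / (1 + y))) with (u / (1 + y - u)) by (field; lra).
  apply Rmult_le_compat_l; [lra|]. apply Rinv_le_contravar; lra.
Qed.

Lemma geom_pgf_below_le_exp (q w eta : R) :
  0 < q <= 1 -> 0 <= w < 1 -> w / q <= eta ->
  in_pgf_domain (1 - w) q /\ geom_pgf q (1 - w) <= exp (- (w / (1 + eta)) / q).
Proof.
  intros Hq Hw Hu. set (u := w / q) in Hu.
  assert (Hu0 : 0 <= u) by (unfold u; apply Rmult_le_pos; [|apply Rlt_le, Rinv_0_lt_compat]; lra).
  assert (Hwu : w = u * q) by (unfold u; field; lra).
  split; [split; [lra | nra]|].
  replace (geom_pgf q (1 - w)) with (/ (1 + u / (1 - w)))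
    by (unfold geom_pgf; rewrite Hwu; field; nra).
  eapply Rle_trans; [apply inv_1_plus_le_exp, Rmult_le_pos;
    [|apply Rlt_le, Rinv_0_lt_compat]; lra|].
  apply exp_le. replace (- (w / (1 + eta)) / q) with (- (u / (1 + eta))) by (unfold u; field; lra).
  replace (u / (1 - w) / (1 + u / (1 - w))) with (u / (1 - w + u)) by (field; lra).
  apply Ropp_le_contravar, Rmult_le_compat_l; [lra|]. apply Rinv_le_contravar; lra.
Qed.

Lemma geom_sum_pgf_le_exp (qs : list R) (z c : R) : 0 <= z ->
  Forall (fun q => in_pgf_domain z q /\ geom_pgf q z <= exp (c / q)) qs ->
  geom_sum_pgf qs z <= exp (c * geom_sum_mean qs).
Proof.
  intros Hz Hqs. induction Hqs as [|q qs [Hq HGq] Hqs IH]; simpl; [rewrite Rmult_0_r, exp_0; lra|].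
  assert (Hdom : Forall (in_pgf_domain z) qs)
    by (eapply Forall_impl; [|exact Hqs]; now intros ? []).
  pose proof (geom_sum_pgf_nonneg qs z Hz Hdom). pose proof (geom_pgf_nonneg q z Hz Hq).
  rewrite Rmult_plus_distr_l, exp_plus. apply Rmult_le_compat; auto.
Qed.

Lemma upper_tail_exponent_le (e p T mu : R) :
  0 < e <= 1 / 2 -> 0 < p <= 1 -> 0 <= T -> mu <= (1 + e / 5) * T ->
  - ((1 + e) * T) * ln (1 + e / 8 * p) + e / 8 * p / (1 - e / 8) * mu <= - (e ^ 2 / 32 * p * T).
Proof.
  intros He Hp HT Hmu. set (y := e / 8 * p).
  assert (Hy : 0 < y <= e / 8) by (unfold y; split; nra).
  assert (Hln : y / (1 + e / 8) <= ln (1 + y)).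
  { eapply Rle_trans; [|apply ln_ge_1_minus_inv; lra].
    replace (1 - / (1 + y)) with (y / (1 + y)) by (field; lra).
    apply Rmult_le_compat_l; [lra|]. apply Rinv_le_contravar; lra. }
  assert (Hrate : (1 + e / 5) / (1 - e / 8) - (1 + e) / (1 + e / 8) + e / 4
                  = e * (- 3 / 10 + 3 * e / 20 - e ^ 2 / 256) / ((1 - e / 8) * (1 + e / 8)))
    by (field; lra).
  assert (Hneg : e * (- 3 / 10 + 3 * e / 20 - e ^ 2 / 256) / ((1 - e / 8) * (1 + e / 8)) <= 0).
  { unfold Rdiv. rewrite <- (Rmult_0_l (/ ((1 - e / 8) * (1 + e / 8)))).
    apply Rmult_le_compat_r; [apply Rlt_le, Rinv_0_lt_compat|]; nra. }
  assert (0 <= y * T) by nra.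
  assert (- ((1 + e) * T) * ln (1 + y) <= - ((1 + e) * T) * (y / (1 + e / 8)))
    by (apply Rmult_le_compat_neg_l; nra).
  assert (y / (1 - e / 8) * mu <= y / (1 - e / 8) * ((1 + e / 5) * T))
    by (apply Rmult_le_compat_l; [apply Rmult_le_pos; [|apply Rlt_le, Rinv_0_lt_compat]|]; lra).
  replace (e ^ 2 / 32 * p * T) with (e / 4 * (y * T)) by (unfold y; field).
  replace (- ((1 + e) * T) * (y / (1 + e / 8)) + y / (1 - e / 8) * ((1 + e / 5) * T))
    with ((y * T) * ((1 + e / 5) / (1 - e / 8) - (1 + e) / (1 + e / 8))) in * by (field; lra).
  nra.
Qed.

Lemma lower_tail_exponent_le (e p T mu : R) :
  0 < e <= 1 / 2 -> 0 < p <= 1 -> 0 <= T -> (1 - e / 5) * T <= mu ->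
  - ((1 - e) * T) * ln (1 - e / 8 * p) + - (e / 8 * p / (1 + e / 8)) * mu
  <= - (e ^ 2 / 32 * p * T).
Proof.
  intros He Hp HT Hmu. set (y := e / 8 * p).
  assert (Hy : 0 < y <= e / 8) by (unfold y; split; nra).
  assert (Hln : - (y / (1 - e / 8)) <= ln (1 - y)).
  { eapply Rle_trans; [|apply ln_ge_1_minus_inv; lra].
    replace (1 - / (1 - y)) with (- (y / (1 - y))) by (field; lra).
    apply Ropp_le_contravar, Rmult_le_compat_l; [lra|]. apply Rinv_le_contravar; lra. }
  assert (Hrate : (1 - e) / (1 - e / 8) - (1 - e / 5) / (1 + e / 8) + e / 4
                  = e * (- 3 / 10 - 3 * e / 20 - e ^ 2 / 256) / ((1 - e / 8) * (1 + e / 8)))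
    by (field; lra).
  assert (Hneg : e * (- 3 / 10 - 3 * e / 20 - e ^ 2 / 256) / ((1 - e / 8) * (1 + e / 8)) <= 0).
  { unfold Rdiv. rewrite <- (Rmult_0_l (/ ((1 - e / 8) * (1 + e / 8)))).
    apply Rmult_le_compat_r; [apply Rlt_le, Rinv_0_lt_compat|]; nra. }
  assert (0 <= y * T) by nra.
  assert (- ((1 - e) * T) * ln (1 - y) <= - ((1 - e) * T) * - (y / (1 - e / 8)))
    by (apply Rmult_le_compat_neg_l; nra).
  assert (- (y / (1 + e / 8)) * mu <= - (y / (1 + e / 8)) * ((1 - e / 5) * T))
    by (apply Rmult_le_compat_neg_l;
        [rewrite <- Ropp_0; apply Ropp_le_contravar, Rmult_le_pos;
         [|apply Rlt_le, Rinv_0_lt_compat]|]; lra).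
  replace (e ^ 2 / 32 * p * T) with (e / 4 * (y * T)) by (unfold y; field).
  replace (- ((1 - e) * T) * - (y / (1 - e / 8)) + - (y / (1 + e / 8)) * ((1 - e / 5) * T))
    with ((y * T) * ((1 - e) / (1 - e / 8) - (1 - e / 5) / (1 + e / 8))) in * by (field; lra).
  nra.
Qed.

Lemma geom_sum_concentration (qs : list R) (p e T : R) :
  0 < p <= 1 -> 0 < e <= 1 / 2 -> 0 <= T -> Forall (fun q => p <= q <= 1) qs ->
  (1 - e / 5) * T <= geom_sum_mean qs <= (1 + e / 5) * T ->
  1 - 3 * exp (- (e ^ 2 / 32 * p * T))
  <= prob_strictly_between qs ((1 - e) * T) ((1 + e) * T).
Proof.
  intros Hp He HT Hqs Hmean.
  set (y := e / 8 * p). assert (Hy : 0 < y <= e / 8) by (unfold y; split; nra).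
  assert (Hyq : Forall (fun q => 0 < q <= 1 /\ y / q <= e / 8) qs).
  { eapply Forall_impl; [|exact Hqs]. intros q Hq. split; [lra|].
    apply (Rmult_le_reg_r q); [lra|]. unfold Rdiv. rewrite Rmult_assoc, Rinv_l by lra.
    unfold y. nra. }
  assert (Habove : Forall (fun q => in_pgf_domain (1 + y) q
                     /\ geom_pgf q (1 + y) <= exp (y / (1 - e / 8) / q)) qs).
  { eapply Forall_impl; [|exact Hyq]. intros q [Hq Hu].
    apply geom_pgf_above_le_exp; lra. }
  assert (Hbelow : Forall (fun q => in_pgf_domain (1 - y) q
                     /\ geom_pgf q (1 - y) <= exp (- (y / (1 + e / 8)) / q)) qs).
  { eapply Forall_impl; [|exact Hyq]. intros q [Hq Hu].
    apply geom_pgf_below_le_exp; lra. }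
  pose proof (prob_strictly_between_ge qs ((1 - e) * T) ((1 + e) * T) (1 - y) (1 + y)
    ltac:(lra) ltac:(lra) (Forall_impl _ (fun q H => proj1 H) Hbelow)
    (Forall_impl _ (fun q H => proj1 H) Habove)) as Hchernoff.
  pose proof (geom_sum_pgf_le_exp qs (1 + y) _ ltac:(lra) Habove) as Hup.
  pose proof (geom_sum_pgf_le_exp qs (1 - y) _ ltac:(lra) Hbelow) as Hlow.
  assert (Eup : exp (- ((1 + e) * T) * ln (1 + y)) * geom_sum_pgf qs (1 + y)
                <= exp (- (e ^ 2 / 32 * p * T))).
  { eapply Rle_trans; [apply Rmult_le_compat_l; [apply Rlt_le, exp_pos | exact Hup]|].
    rewrite <- exp_plus. apply exp_le, upper_tail_exponent_le; lra. }
  assert (Elow : exp (- ((1 - e) * T) * ln (1 - y)) * geom_sum_pgf qs (1 - y)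
                 <= exp (- (e ^ 2 / 32 * p * T))).
  { eapply Rle_trans; [apply Rmult_le_compat_l; [apply Rlt_le, exp_pos | exact Hlow]|].
    rewrite <- exp_plus. apply exp_le, lower_tail_exponent_le; lra. }
  lra.
Qed.

(** * The success probabilities [1 - (1 - p)^i] *)

Definition geom_succ_probs (p : R) (m : nat) : list R :=
  map (fun i => 1 - (1 - p) ^ i) (seq 1 m).

Lemma geom_succ_prob_bounds (p : R) (i : nat) :
  0 < p <= 1 -> (1 <= i)%nat -> p <= 1 - (1 - p) ^ i <= 1.
Proof.
  intros Hp Hi. destruct i as [|i]; [lia|]. simpl.
  pose proof (pow_le (1 - p) i ltac:(lra)). pose proof (pow_le_1 (1 - p) i ltac:(lra)).
  assert (0 <= (1 - p) * (1 - p) ^ i <= 1 - p) by (split; nra). lra.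
Qed.

Lemma geom_succ_probs_bounds (p : R) (m : nat) :
  0 < p <= 1 -> Forall (fun q => p <= q <= 1) (geom_succ_probs p m).
Proof.
  intros Hp. apply Forall_forall. intros q Hq. apply in_map_iff in Hq.
  destruct Hq as [i [<- Hi]]. apply in_seq in Hi. apply geom_succ_prob_bounds; [exact Hp | lia].
Qed.

Definition harmonic (K : nat) : R := sum_1_to K (fun i => / INR i).

Lemma harmonic_nonneg (K : nat) : 0 <= harmonic K.
Proof.
  induction K as [|K IH]; unfold harmonic in *; cbn [sum_1_to]; [lra|].
  pose proof (Rinv_0_lt_compat (INR (S K)) (lt_0_INR _ (Nat.lt_0_succ K))). lra.
Qed.

Lemma ln_succ_le_harmonic (K : nat) : ln (INR K + 1) <= harmonic K.
Proof.
  induction K as [|K IH]; [simpl; rewrite Rplus_0_l, ln_1; unfold harmonic; simpl; lra|].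
  unfold harmonic in *. cbn [sum_1_to]. rewrite S_INR. pose proof (pos_INR K).
  replace (INR K + 1 + 1) with ((INR K + 1) * (1 + / (INR K + 1))) by (field; lra).
  pose proof (Rinv_0_lt_compat (INR K + 1) ltac:(lra)).
  rewrite ln_mult by lra. pose proof (ln_le_minus_1 (1 + / (INR K + 1)) ltac:(lra)). lra.
Qed.

Lemma harmonic_le_1_plus_ln (K : nat) : (1 <= K)%nat -> harmonic K <= 1 + ln (INR K).
Proof.
  induction 1 as [|K HK IH]; [unfold harmonic; simpl; rewrite ln_1; lra|].
  unfold harmonic in *. cbn [sum_1_to]. rewrite S_INR.
  assert (1 <= INR K) by (apply (le_INR 1); lia).
  assert (Hinv : 0 < / (INR K + 1) < 1)
    by (split; [apply Rinv_0_lt_compat | rewrite <- Rinv_1 at 2; apply Rinv_lt_contravar]; lra).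
  replace (INR K) with ((INR K + 1) * (1 - / (INR K + 1))) in IH by (field; lra).
  rewrite ln_mult in IH by lra. pose proof (ln_le_minus_1 (1 - / (INR K + 1)) ltac:(lra)). lra.
Qed.

Definition succ_excess (p : R) (i : nat) : R := (1 - p) ^ i / (1 - (1 - p) ^ i).

Lemma geom_sum_mean_app (l1 l2 : list R) :
  geom_sum_mean (l1 ++ l2) = geom_sum_mean l1 + geom_sum_mean l2.
Proof. induction l1 as [|q l1 IH]; simpl; [|rewrite IH]; ring. Qed.

Lemma geom_sum_mean_succ_probs (p : R) (m : nat) : 0 < p <= 1 ->
  geom_sum_mean (geom_succ_probs p m) = INR m + sum_1_to m (succ_excess p).
Proof.
  intros Hp. induction m as [|m IH]; [simpl; ring|].
  unfold geom_succ_probs in *. rewrite seq_S, map_app, geom_sum_mean_app, IH.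
  cbn [sum_1_to]. rewrite S_INR.
  pose proof (geom_succ_prob_bounds p (1 + m) Hp ltac:(lia)).
  replace (1 + m)%nat with (S m) in * by lia. cbn [map].
  enough (geom_sum_mean ((1 - (1 - p) ^ S m) :: nil) = 1 + succ_excess p (S m)) by lra.
  unfold succ_excess. set (r := (1 - p) ^ S m) in *. simpl. field. lra.
Qed.

Section SuccExcess.

Variables (p : R) (i : nat).
Hypotheses (Hp : 0 < p <= 1) (Hi : (1 <= i)%nat).

Let r_bounds : 0 <= (1 - p) ^ i < 1.
Proof. apply pow_lt_1_compat; [lra | lia]. Qed.

Let ip_pos : 0 < INR i * p.
Proof. apply Rmult_lt_0_compat; [apply lt_0_INR; lia | lra]. Qed.

Lemma succ_excess_nonneg : 0 <= succ_excess p i.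
Proof.
  pose proof r_bounds. unfold succ_excess.
  apply Rmult_le_pos; [|apply Rlt_le, Rinv_0_lt_compat]; lra.
Qed.

Lemma succ_excess_le : succ_excess p i <= / (INR i * p).
Proof.
  pose proof r_bounds. pose proof ip_pos.
  assert (Hr : (1 - p) ^ i * (1 + INR i * p) <= 1).
  { pose proof (poly i p (proj1 Hp)).
    assert ((1 - p) ^ i * (1 + p) ^ i <= 1)
      by (rewrite <- Rpow_mult_distr; apply pow_le_1; nra).
    assert ((1 - p) ^ i * (1 + INR i * p) <= (1 - p) ^ i * (1 + p) ^ i)
      by (apply Rmult_le_compat_l; lra).
    lra. }
  unfold succ_excess. set (r := (1 - p) ^ i) in *.
  assert (0 < INR i) by (apply lt_0_INR; lia).
  apply (Rmult_le_reg_r ((1 - r) * (INR i * p))); [nra|].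
  replace (r / (1 - r) * ((1 - r) * (INR i * p))) with (r * (INR i * p))
    by (field; repeat split; lra).
  replace (/ (INR i * p) * ((1 - r) * (INR i * p))) with (1 - r)
    by (field; repeat split; lra).
  lra.
Qed.

Lemma succ_excess_ge (K : nat) : (i <= K)%nat ->
  (1 - INR K * p) / (INR i * p) <= succ_excess p i.
Proof.
  intros HiK. pose proof r_bounds. pose proof ip_pos.
  assert (Hr : 1 - INR K * p <= (1 - p) ^ i).
  { pose proof (pow_1_minus_ge p i ltac:(lra)). apply le_INR in HiK. nra. }
  assert (Hq : 1 - (1 - p) ^ i <= INR i * p) by (pose proof (pow_1_minus_ge p i ltac:(lra)); lra).
  unfold succ_excess, Rdiv. eapply Rle_trans.
  - apply Rmult_le_compat_r; [apply Rlt_le, Rinv_0_lt_compat; lra | exact Hr].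
  - apply Rmult_le_compat_l; [lra|]. apply Rinv_le_contravar; lra.
Qed.

End SuccExcess.

Lemma geom_sum_mean_succ_probs_le (p : R) (m : nat) : 0 < p <= 1 ->
  geom_sum_mean (geom_succ_probs p m) <= INR m + harmonic m / p.
Proof.
  intros Hp. rewrite geom_sum_mean_succ_probs by exact Hp. apply Rplus_le_compat_l.
  unfold harmonic, Rdiv. rewrite Rmult_comm, <- sum_1_to_scal. apply sum_1_to_le.
  intros k Hk. assert (INR k <> 0) by (apply not_0_INR; lia).
  replace (/ p * / INR k) with (/ (INR k * p)) by (field; split; lra).
  apply succ_excess_le; lra || lia.
Qed.

Lemma geom_sum_mean_succ_probs_ge (p : R) (m K : nat) : 0 < p <= 1 -> (K <= m)%nat ->
  INR m + (1 - INR K * p) * harmonic K / p <= geom_sum_mean (geom_succ_probs p m).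
Proof.
  intros Hp HKm. rewrite geom_sum_mean_succ_probs by exact Hp. apply Rplus_le_compat_l.
  eapply Rle_trans; [|apply (sum_1_to_le_nonneg K m); [exact HKm|]].
  2:{ intros k Hk. apply succ_excess_nonneg; lra || lia. }
  unfold harmonic, Rdiv.
  replace ((1 - INR K * p) * sum_1_to K (fun i => / INR i) * / p)
    with (sum_1_to K (fun i => (1 - INR K * p) * / p * / INR i)) by (rewrite sum_1_to_scal; ring).
  apply sum_1_to_le. intros k Hk.
  assert (INR k <> 0) by (apply not_0_INR; lia).
  replace ((1 - INR K * p) * / p * / INR k) with ((1 - INR K * p) / (INR k * p))
    by (field; split; lra).
  apply succ_excess_ge; lra || lia.
Qed.

(** * Asymptotics in [n] *)

Lemma edge_p_bounds (f : nat -> R) (n : nat) : f n > 28 -> 0 < INR n -> 1 <= ln (INR n) ->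
  0 < edge_p f n <= 1 /\ ln (INR n) / INR n <= edge_p f n
  /\ INR n / f n / ln (INR n) <= / edge_p f n <= 1 + INR n / f n / ln (INR n).
Proof.
  intros Hf HN Hl. set (N := INR n) in *. set (l := ln N) in *.
  assert (HlN : l < N) by (pose proof (ln_le_minus_1 N HN); unfold l; lra).
  assert (Hx : 0 < f n * l / N) by (apply Rdiv_lt_0_compat; nra).
  assert (Hinv : / (f n * l / N) = N / f n / l) by (field; repeat split; lra).
  assert (Hlx : l / N <= f n * l / N)
    by (unfold Rdiv; apply Rmult_le_compat_r; [apply Rlt_le, Rinv_0_lt_compat|]; nra).
  assert (Hl1 : l / N <= 1)
    by (apply (Rmult_le_reg_r N); [|unfold Rdiv; rewrite Rmult_assoc, Rinv_l by lra]; lra).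
  pose proof (Rinv_0_lt_compat _ Hx). rewrite Hinv in *.
  unfold edge_p. fold N l. unfold Rmin. destruct Rle_dec as [Hle|Hgt].
  - rewrite Rinv_1, <- Hinv. repeat split; try lra.
    rewrite <- Rinv_1. apply Rinv_le_contravar; lra.
  - rewrite Hinv. repeat split; lra.
Qed.

Lemma div_7_bounds (n : nat) : (INR n - 6) / 7 <= INR (n / 7) <= INR n / 7.
Proof.
  pose proof (Nat.div_mod n 7 ltac:(lia)) as Hdm. pose proof (Nat.mod_upper_bound n 7 ltac:(lia)).
  assert (Hlo : (n <= 7 * (n / 7) + 6)%nat) by lia.
  assert (Hhi : (7 * (n / 7) <= n)%nat) by lia.
  apply le_INR in Hlo, Hhi. rewrite plus_INR, !mult_INR in *.
  replace (INR 7) with 7 in * by (simpl; lra). replace (INR 6) with 6 in * by (simpl; lra).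
  split; lra.
Qed.

Lemma target_ge (f : nat -> R) (n : nat) : f n > 28 -> 48 <= INR n -> INR n / 8 <= target f n.
Proof.
  intros Hf HN. destruct (div_7_bounds n). unfold target.
  assert (0 <= INR n / f n) by (apply Rmult_le_pos; [|apply Rlt_le, Rinv_0_lt_compat]; lra).
  lra.
Qed.

Lemma geom_sum_mean_succ_probs_le_target (p Q l : R) (m : nat) :
  0 < p <= 1 -> (1 <= m)%nat -> ln (INR m) <= l -> 0 < l -> 0 <= Q -> / p <= 1 + Q / l ->
  geom_sum_mean (geom_succ_probs p m) <= INR m + Q + (1 + l + Q / l).
Proof.
  intros Hp Hm Hml Hl HQ Hip. pose proof (geom_sum_mean_succ_probs_le p m Hp).
  pose proof (harmonic_le_1_plus_ln m Hm). pose proof (harmonic_nonneg m).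
  assert (Hh : harmonic m / p <= (1 + l) * (1 + Q / l)).
  { unfold Rdiv at 1. apply Rmult_le_compat; try lra. apply Rlt_le, Rinv_0_lt_compat; lra. }
  replace ((1 + l) * (1 + Q / l)) with (Q + (1 + l + Q / l)) in Hh by (field; lra).
  lra.
Qed.

Lemma geom_sum_mean_succ_probs_ge_target (p Q N : R) (m : nat) :
  0 < p <= 1 -> 1 <= ln N -> 2 * ln (ln N) <= ln N -> N / ln N ^ 2 + 1 <= INR m -> INR m <= N ->
  0 <= Q -> Q / ln N <= / p ->
  INR m + Q - (2 * ln (ln N) / ln N * Q + (N / ln N ^ 2 + 1) * (1 + ln N))
  <= geom_sum_mean (geom_succ_probs p m).
Proof.
  intros Hp Hl Hll Hm HmN HQ Hip.
  assert (HN : 0 < N) by (apply ln_pos_arg; lra). set (l := ln N) in *.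
  set (x := N / l ^ 2) in *. assert (Hx : 0 < x) by (unfold x; apply Rdiv_lt_0_compat; nra).
  set (K := Z.to_nat (up x)). destruct (up_nat_bounds x Hx) as [HKlo HKhi]. fold K in HKlo, HKhi.
  assert (HKm : (K <= m)%nat) by (apply INR_le; lra).
  assert (HK1 : (1 <= K)%nat) by (destruct K; [simpl in HKlo; lra | lia]).
  pose proof (geom_sum_mean_succ_probs_ge p m K Hp HKm) as Hmean.
  assert (Hlnx : ln x = l - 2 * ln l)
    by (unfold x, Rdiv; rewrite ln_mult, ln_Rinv, ln_pow by
          (try apply Rinv_0_lt_compat; try apply pow_lt; lra);
        unfold l; simpl; ring).
  assert (HHlo : l - 2 * ln l <= harmonic K).
  { rewrite <- Hlnx. eapply Rle_trans; [|apply ln_succ_le_harmonic]. apply ln_le; lra. }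
  assert (HHhi : harmonic K <= 1 + l).
  { pose proof (harmonic_le_1_plus_ln K HK1). pose proof (ln_le (INR K) N ltac:(lra) ltac:(lra)).
    unfold l. lra. }
  assert (Hlow : (l - 2 * ln l) * (Q / l) <= harmonic K / p)
    by (unfold Rdiv at 2; apply Rmult_le_compat; try lra; unfold Rdiv;
        apply Rmult_le_pos; [lra | apply Rlt_le, Rinv_0_lt_compat; lra]).
  assert (Hprod : INR K * harmonic K <= (x + 1) * (1 + l))
    by (apply Rmult_le_compat; [apply pos_INR | lra | lra | lra]).
  replace ((1 - INR K * p) * harmonic K / p) with (harmonic K / p - INR K * harmonic K)
    in Hmean by (field; lra).
  replace ((l - 2 * ln l) * (Q / l)) with (Q - 2 * ln l / l * Q) in Hlow by (field; lra).
  lra.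
Qed.

Lemma eventually_INR_ge (c : R) : eventually (fun n => c <= INR n).
Proof.
  exists (Z.to_nat (up c)). intros n Hn. pose proof (lt_INR_up c). apply le_INR in Hn. lra.
Qed.

Lemma eventually_ln_INR_ge (c : R) : eventually (fun n => c <= ln (INR n)).
Proof.
  eapply filter_imp; [|apply (eventually_INR_ge (exp c))]. intros n Hn.
  rewrite <- (ln_exp c). apply ln_le; [apply exp_pos | exact Hn].
Qed.

Lemma eventually_ln_le_mul (u : nat -> R) (d : R) : 0 < d ->
  (forall c, eventually (fun n => c <= u n)) -> eventually (fun n => ln (u n) <= d * u n).
Proof.
  intros Hd Hu. eapply filter_imp; [|apply (Hu (4 / d ^ 2))]. intros n Hn.
  apply ln_le_mul; assumption.
Qed.

Lemma Un_cv_1_of_exp_lower_bound (u x : nat -> R) (C : R) : 0 < C ->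
  eventually (fun n => 1 - C * exp (- x n) <= u n <= 1) ->
  (forall c, eventually (fun n => c <= x n)) -> Un_cv u 1.
Proof.
  intros HC Hu Hx eps Heps.
  destruct (filter_and _ _ Hu (Hx (- ln (eps / (2 * C))))) as [N HN].
  exists N. intros n Hn. destruct (HN n Hn) as [[Hlo Hhi] Hxn].
  assert (Hexp : C * exp (- x n) <= eps / 2).
  { replace (eps / 2) with (C * exp (ln (eps / (2 * C))))
      by (rewrite exp_ln by (apply Rdiv_lt_0_compat; lra); field; lra).
    apply Rmult_le_compat_l; [lra|]. apply exp_le. lra. }
  unfold R_dist. rewrite Rabs_left1; lra.
Qed.

Definition mean_error (N : R) : R := 2 * N / ln N + N * ln (ln N) / (14 * ln N) + 1 + ln N.

Lemma geom_sum_mean_succ_probs_near (p Q N : R) (m : nat) :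
  0 < p <= 1 -> 48 <= N -> 4 <= ln N -> 2 * ln (ln N) <= ln N ->
  (N - 6) / 7 <= INR m <= N / 7 -> 0 <= Q <= N / 28 -> Q / ln N <= / p <= 1 + Q / ln N ->
  INR m + Q - mean_error N <= geom_sum_mean (geom_succ_probs p m) <= INR m + Q + mean_error N.
Proof.
  intros Hp HN Hl Hll Hm HQ Hip. unfold mean_error. set (l := ln N) in *.
  assert (Hm1 : (1 <= m)%nat) by (apply INR_le; change (INR 1) with 1; lra).
  assert (Hml : ln (INR m) <= l) by (apply ln_le; [apply lt_0_INR; lia | lra]).
  assert (HNl2 : N / l ^ 2 <= N / 16 /\ N / l ^ 2 <= N / l)
    by (split; unfold Rdiv; apply Rmult_le_compat_l; try lra; apply Rinv_le_contravar; nra).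
  assert (HQl : Q / l <= N / l / 28).
  { replace (N / l / 28) with (N / 28 / l) by (field; lra).
    unfold Rdiv at 1 3. apply Rmult_le_compat_r; [apply Rlt_le, Rinv_0_lt_compat; lra | apply HQ]. }
  assert (Hll0 : 0 <= 2 * ln l / l).
  { pose proof (ln_le 1 l ltac:(lra) ltac:(lra)) as Hl0. rewrite ln_1 in Hl0.
    apply Rmult_le_pos; [|apply Rlt_le, Rinv_0_lt_compat]; lra. }
  assert (Hlog : 2 * ln l / l * Q <= N * ln l / (14 * l)).
  { replace (N * ln l / (14 * l)) with (2 * ln l / l * (N / 28)) by (field; lra).
    apply Rmult_le_compat_l; [exact Hll0 | apply HQ]. }
  assert (0 <= 2 * ln l / l * Q) by (apply Rmult_le_pos; [exact Hll0 | apply HQ]).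
  pose proof (geom_sum_mean_succ_probs_le_target p Q l m Hp Hm1 Hml ltac:(lra) (proj1 HQ)
    (proj2 Hip)).
  assert (Hl1 : 1 <= l) by lra. assert (HmK : N / l ^ 2 + 1 <= INR m) by lra.
  pose proof (geom_sum_mean_succ_probs_ge_target p Q N m Hp Hl1 Hll HmK ltac:(lra)
    (proj1 HQ) (proj1 Hip)) as Hlo. fold l in Hlo.
  assert ((N / l ^ 2 + 1) * (1 + l) = N / l ^ 2 + N / l + 1 + l) by (field; lra).
  assert (2 * N / l = N / l + N / l) by (field; lra).
  assert (0 <= N / l) by (apply Rlt_le, Rdiv_lt_0_compat; lra).
  split; lra.
Qed.

Lemma mean_error_small (delta : R) : 0 < delta ->
  eventually (fun n => mean_error (INR n) <= delta * INR n).
Proof.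
  intros Hd.
  pose proof (eventually_ln_le_mul _ delta Hd eventually_ln_INR_ge) as Hlnl.
  pose proof (eventually_ln_le_mul _ (delta / 4) ltac:(lra) eventually_INR_ge) as HlN.
  eapply filter_imp; [|exact (filter_and _ _ (eventually_INR_ge (4 / delta))
    (filter_and _ _ (eventually_ln_INR_ge (16 / delta)) (filter_and _ _ Hlnl HlN)))].
  intros n (HN & Hl & Hlnl1 & HlN1). unfold mean_error. set (N := INR n) in *.
  set (l := ln N) in *.
  assert (0 < 4 / delta /\ 0 < 16 / delta) by (split; apply Rdiv_lt_0_compat; lra).
  assert (H1N : 1 <= delta / 4 * N) by
    (replace 1 with (delta / 4 * (4 / delta)) by (field; lra); apply Rmult_le_compat_l; lra).
  assert (H2Nl : 2 * N / l <= delta / 8 * N).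
  { apply div_le_of_le_mul; [lra|].
    assert (1 <= delta / 16 * l) by
      (replace 1 with (delta / 16 * (16 / delta)) by (field; lra); apply Rmult_le_compat_l; lra).
    nra. }
  assert (Hlog : N * ln l / (14 * l) <= delta / 14 * N).
  { apply div_le_of_le_mul; [lra|]. replace (delta / 14 * N * (14 * l)) with (N * (delta * l))
      by field. apply Rmult_le_compat_l; lra. }
  lra.
Qed.

Lemma succ_probs_mean_near_target (f : nat -> R) (delta : R) :
  (forall n, f n > 28) -> 0 < delta ->
  eventually (fun n => target f n - delta * INR n <= geom_sum_mean (succ_probs f n)
                       <= target f n + delta * INR n).
Proof.
  intros f_gt Hd.
  pose proof (eventually_ln_le_mul _ (1 / 2) ltac:(lra) eventually_ln_INR_ge) as Hll.
  eapply filter_imp; [|exact (filter_and _ _ (mean_error_small delta Hd)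
    (filter_and _ _ (eventually_INR_ge 48) (filter_and _ _ (eventually_ln_INR_ge 4) Hll)))].
  intros n (Herr & HN & Hl & Hll1). specialize (f_gt n).
  destruct (edge_p_bounds f n f_gt ltac:(lra) ltac:(lra)) as (Hp & _ & Hip).
  assert (HQ : 0 <= INR n / f n <= INR n / 28).
  { split; unfold Rdiv; [apply Rmult_le_pos; [|apply Rlt_le, Rinv_0_lt_compat]; lra|].
    apply Rmult_le_compat_l; [|apply Rinv_le_contravar]; lra. }
  pose proof (geom_sum_mean_succ_probs_near (edge_p f n) (INR n / f n) (INR n) (n / 7) Hp HN Hl
    ltac:(lra) (div_7_bounds n) HQ Hip).
  change (succ_probs f n) with (geom_succ_probs (edge_p f n) (n / 7)).
  unfold target. lra.
Qed.

Lemma edge_p_target_unbounded (f : nat -> R) (c : R) : (forall n, f n > 28) ->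
  eventually (fun n => c <= edge_p f n * target f n).
Proof.
  intros f_gt.
  eapply filter_imp; [|exact (filter_and _ _ (eventually_INR_ge 48)
                                              (eventually_ln_INR_ge (1 + 8 * Rabs c)))].
  intros n [HN Hl]. pose proof (Rle_abs c).
  destruct (edge_p_bounds f n (f_gt n) ltac:(lra) ltac:(pose proof (Rabs_pos c); lra))
    as (Hp & Hpl & _).
  pose proof (target_ge f n (f_gt n) HN).
  assert (ln (INR n) / INR n * (INR n / 8) <= edge_p f n * target f n)
    by (apply Rmult_le_compat; try lra; apply Rmult_le_pos;
        [pose proof (Rabs_pos c); lra | apply Rlt_le, Rinv_0_lt_compat; lra]).
  replace (ln (INR n) / INR n * (INR n / 8)) with (ln (INR n) / 8) in * by (field; lra).
  lra.
Qed.

Lemma succ_probs_concentration (f : nat -> R) (eps : R) : (forall n, f n > 28) -> 0 < eps ->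
  eventually (fun n =>
    1 - 3 * exp (- (Rmin eps (1 / 2) ^ 2 / 32 * edge_p f n * target f n))
    <= prob_strictly_between (succ_probs f n) ((1 - eps) * target f n) ((1 + eps) * target f n)
    <= 1).
Proof.
  intros f_gt Heps. set (e := Rmin eps (1 / 2)).
  assert (He : 0 < e <= 1 / 2) by (unfold e, Rmin; destruct Rle_dec; lra).
  assert (Heeps : e <= eps) by apply Rmin_l.
  pose proof (succ_probs_mean_near_target f (e / 40) f_gt ltac:(lra)) as Hnear.
  eapply filter_imp; [|exact (filter_and _ _ Hnear
    (filter_and _ _ (eventually_INR_ge 48) (eventually_ln_INR_ge 1)))].
  intros n (Hmean & HN & Hl).
  destruct (edge_p_bounds f n (f_gt n) ltac:(lra) Hl) as (Hp & _).
  pose proof (target_ge f n (f_gt n) HN) as HT.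
  pose proof (geom_succ_probs_bounds _ (n / 7) Hp) as Hqs.
  assert (Hqs01 : Forall (fun q => 0 <= q <= 1) (geom_succ_probs (edge_p f n) (n / 7)))
    by (eapply Forall_impl; [|exact Hqs]; intros q Hq; lra).
  change (succ_probs f n) with (geom_succ_probs (edge_p f n) (n / 7)) in *.
  assert (e / 40 * INR n <= e / 5 * target f n) by nra.
  split; [|apply prob_strictly_between_le_1, Hqs01].
  eapply Rle_trans; [apply (geom_sum_concentration (geom_succ_probs (edge_p f n) (n / 7)));
    try assumption; try split; lra|].
  apply prob_strictly_between_widen; [exact Hqs01 | nra | nra].
Qed.

Theorem lemma3 (f : nat -> R)
  (f_mono : forall m n : nat, (m <= n)%nat -> f m <= f n)
  (f_gt : forall n : nat, f n > 28)
  (eps : R) (heps : eps > 0) :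
  Un_cv (fun n => prob_strictly_between (succ_probs f n)
                    ((1 - eps) * target f n) ((1 + eps) * target f n)) 1.
Proof.
  set (k := Rmin eps (1 / 2) ^ 2 / 32).
  assert (Hk : 0 < k) by (unfold k, Rmin; destruct Rle_dec; apply Rdiv_lt_0_compat;
                          [apply pow_lt|..]; lra).
  apply (Un_cv_1_of_exp_lower_bound _ (fun n => k * edge_p f n * target f n) 3); [lra| |].
  - exact (succ_probs_concentration f eps f_gt heps).
  - intros c. eapply filter_imp; [|exact (edge_p_target_unbounded f (c / k) f_gt)].
    intros n Hn. rewrite Rmult_assoc.
    replace c with (k * (c / k)) by (field; lra). apply Rmult_le_compat_l; lra.
Qed.
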